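(* The edge generating series of the Grand Dyck lattices is $$\sum_{n\ge0}\ell(\mathcal{GD}_n)x^n=\frac{x}{(1-4x)^{3/2}},$$ and for every $n\ge0$, $\ell(\mathcal{GD}_n)=\binom{2n}{n}\frac n2$. Consequently $i(\mathcal{GD}_n)=n/2$ for all $n$.
   Context: Steps: $U=(1,1)$, $D=(1,-1)$. $\mathcal{GD}_n$ is the set of all lattice paths from $(0,0)$ to $(2n,0)$ with steps $U,D$, partially ordered by $\gamma_1\le\gamma_2$ iff $\gamma_1$ lies weakly below $\gamma_2$. For a finite poset $P$, $\ell(P)$ is the number of edges of its Hasse diagram (number of covering pairs) and $i(P)=\ell(P)/|P|$. *)

From HB Require Import structures.
From mathcomp Require Import all_boot all_order all_algebra.
Set Implicit Arguments. Unset Strict Implicit. Unset Printing Implicit Defensive.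
Import Order.TTheory GRing.Theory Num.Theory.
Local Open Scope ring_scope.

(* A lattice path with steps U=(1,1), D=(1,-1) of length 2n is encoded as a
   (2n)-tuple of booleans: true = U, false = D. *)
Definition step (b : bool) : int := if b then 1 else -1.

Definition height (s : seq bool) (k : nat) : int :=
  \sum_(b <- take k s) step b.

Definition GD (n : nat) : {set (2 * n)%N.-tuple bool} :=
  [set t : (2 * n)%N.-tuple bool | height t (2 * n) == 0].

Definition below (n : nat) (s t : (2 * n)%N.-tuple bool) : bool :=
  [forall k : 'I_(2 * n).+1, height s k <= height t k].

Definition hasse_edges (T : finType) (A : {set T}) (le : rel T) : {set T * T} :=
  [set p : T * T | [&& p.1 \in A, p.2 \in A, p.1 != p.2, le p.1 p.2 &
     ~~ [exists c in A, [&& c != p.1, c != p.2, le p.1 c & le c p.2]]]].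

Definition ell_GD (n : nat) : nat := #|hasse_edges (GD n) (@below n)|.

Definition i_GD (n : nat) : rat := (ell_GD n)%:R / (#|GD n|)%:R.

(* coefficient of x^n in the formal power series x/(1-4x)^(3/2), via the
   generalized binomial expansion (1-4x)^(-3/2) = sum_m 4^m (3/2)_m / m! x^m
   ((a)_m the rising factorial). *)
Definition gf_coef (n : nat) : rat :=
  match n with
  | 0 => 0
  | m.+1 => 4 ^+ m * (\prod_(i < m) (3%:R / 2%:R + i%:R)) / (m`!)%:R
  end.

From HB Require Import structures.
From mathcomp Require Import all_boot all_order all_algebra.
From mathcomp Require Import zify ring.
Import Order.TTheory GRing.Theory Num.Theory.
Set Implicit Arguments. Unset Strict Implicit. Unset Printing Implicit Defensive.
Local Open Scope ring_scope.

(* The key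
   structural fact is that the covering pairs (s, t) of GD_n are exactly the
   pairs where t is obtained from s by turning a valley D U into a peak U D:
   such a flip raises s by 2 at a single abscissa and nothing fits in
   between; conversely, if s < t then at an abscissa where t is above s and
   s is lowest, s has a valley whose flip still lies below t.

   Counting covering pairs is therefore counting (valley position, path)
   pairs.  Encoding a path by the set of its D positions, the paths of GD_n
   with a valley at a fixed position i < 2n - 1 are counted by C(2n-2, n-1),
   so l(GD_{n+1}) = (2n+1) C(2n, n) = C(2n+2, n+1) (n+1) / 2.  This is also
   the coefficient of x^{n+1} in x / (1-4x)^{3/2}, and with |GD_n| = C(2n, n)
   it gives i(GD_n) = n / 2. *)

Lemma sum_stepE (s : seq bool) :
  \sum_(b <- s) step b = (size s)%:Z - 2%:Z * (count negb s)%:Z.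
Proof.
elim: s => [|b s IH]; first by rewrite big_nil.
by rewrite big_cons IH; case: b => /=; rewrite /step; lia.
Qed.

Lemma heightE (s : seq bool) (k : nat) :
  height s k = (minn k (size s))%:Z - 2%:Z * (count negb (take k s))%:Z.
Proof. by rewrite /height sum_stepE size_take_min. Qed.

Lemma height0 (s : seq bool) : height s 0 = 0.
Proof. by rewrite /height take0 big_nil. Qed.

Lemma heightS (s : seq bool) (k : nat) : (k < size s)%N ->
  height s k.+1 = height s k + step (nth false s k).
Proof. by move=> hk; rewrite /height (take_nth false hk) -cats1 big_cat big_seq1. Qed.

Lemma height_step (s : seq bool) (k : nat) : (k < size s)%N ->
  height s k.+1 = height s k + 1 \/ height s k.+1 = height s k - 1.
Proof. by move=> hk; rewrite heightS //; case: nth; [left|right]. Qed.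

Lemma height_diff_even (s t : seq bool) (k : nat) :
  (k <= size s)%N -> (k <= size t)%N ->
  exists z : int, height t k - height s k = 2%:Z * z.
Proof.
move=> hs ht; rewrite !heightE !(minn_idPl _) //.
by exists ((count negb (take k s))%:Z - (count negb (take k t))%:Z); lia.
Qed.

Lemma height_inj (m : nat) (s t : m.-tuple bool) :
  (forall k, (k <= m)%N -> height s k = height t k) -> s = t.
Proof.
move=> hh; apply/val_inj/(eq_from_nth (x0 := false)) => [|k]; rewrite !size_tuple //.
move=> hk; have := hh k.+1 hk; rewrite !heightS ?size_tuple // hh ?(ltnW hk) //.
by move/addrI; case: nth; case: nth.
Qed.

Definition flip (m : nat) (t : m.-tuple bool) (i : nat) : m.-tuple bool :=
  [tuple if j == i :> nat then true else if j == i.+1 :> nat then false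
         else tnth t j | j < m].

Definition valley (m : nat) (t : m.-tuple bool) (i : nat) : bool :=
  [&& (i.+1 < m)%N, ~~ nth false t i & nth false t i.+1].

Lemma nth_flip (m : nat) (t : m.-tuple bool) (i j : nat) : (i.+1 < m)%N ->
  nth false (flip t i) j =
    if j == i then true else if j == i.+1 then false else nth false t j.
Proof.
move=> hi; case: (ltnP j m) => hj.
  by rewrite -(tnth_nth false (flip t i) (Ordinal hj)) tnth_mktuple (tnth_nth false).
rewrite !nth_default ?size_tuple //.
by rewrite (gtn_eqF (leq_trans hi hj)) (gtn_eqF (leq_trans (ltnW hi) hj)).
Qed.

Lemma height_flip (m : nat) (t : m.-tuple bool) (i k : nat) :
  valley t i -> (k <= m)%N ->
  height (flip t i) k = height t k + (if k == i.+1 then 2 else 0).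
Proof.
case/and3P=> hi /negbTE hd hu; elim: k => [|k IH] hk; first by rewrite !height0.
rewrite !heightS ?size_tuple // IH ?(ltnW hk) // nth_flip //.
case: (eqVneq k i) => [->|hki]; first by rewrite eqxx (ltn_eqF (ltnSn i)) hd /step; lia.
case: (eqVneq k i.+1) => [->|hki1]; first by rewrite (gtn_eqF (ltnSn _)) hu /step; lia.
by rewrite eqSS (negbTE hki) !addr0.
Qed.

Lemma flip_neq (m : nat) (t : m.-tuple bool) (i : nat) : valley t i -> flip t i != t.
Proof.
case/and3P=> hi hd _; apply: contraNneq hd => e.
by rewrite -[in X in nth _ X _]e nth_flip // eqxx.
Qed.

Lemma flip_injective (m : nat) (s : m.-tuple bool) (i j : nat) :
  valley s i -> valley s j -> flip s i = flip s j -> i = j.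
Proof.
case/and3P=> hi /negbTE s_i _ /and3P[hj _ _] e.
have := congr1 (fun u : m.-tuple bool => nth false u i) e; rewrite !nth_flip // eqxx.
by case: (eqVneq i j) => // _; case: ifP; rewrite ?s_i.
Qed.

Definition weakly_below (m : nat) (s t : m.-tuple bool) : Prop :=
  forall k, (k <= m)%N -> height s k <= height t k.

Lemma belowP (n : nat) (s t : (2 * n)%N.-tuple bool) :
  reflect (weakly_below s t) (below s t).
Proof.
apply: (iffP forallP) => [h k hk | h k]; last by apply: h; rewrite -ltnS.
exact: (h (Ordinal (hk : (k < (2 * n).+1)%N))).
Qed.

Lemma below_flip (m : nat) (s : m.-tuple bool) (i : nat) :
  valley s i -> weakly_below s (flip s i).
Proof. by move=> hv k hk; rewrite height_flip //; case: ifP => _; lia. Qed.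

(* ... and nothing lies strictly in between: a path squeezed between s and
   its flip agrees with s off abscissa i+1, where one step forces one of
   the two possible heights. *)
Lemma between_flip (m : nat) (s c : m.-tuple bool) (i : nat) : valley s i ->
  weakly_below s c -> weakly_below c (flip s i) -> c = s \/ c = flip s i.
Proof.
move=> hv hsc hcf; have /and3P[hi /negbTE hd _] := hv.
have c_off k : (k <= m)%N -> k != i.+1 -> height c k = height s k.
  move=> hk hne; apply/eqP; rewrite eq_le hsc // andbT.
  by have := hcf k hk; rewrite height_flip // (negbTE hne) addr0.
have hc_i : height c i = height s i by apply: c_off; [lia | rewrite neq_ltn ltnSn].
have hs_succ : height s i.+1 = height s i - 1 by rewrite heightS ?size_tuple ?hd /step; lia.
have heights_eq (u : m.-tuple bool) : height c i.+1 = height u i.+1 ->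
    (forall k, (k <= m)%N -> k != i.+1 -> height u k = height s k) -> c = u.
  move=> e hu; apply: height_inj => k hk.
  by case: (eqVneq k i.+1) => [-> // | hne]; rewrite c_off ?hu.
have [cU | cD] := @height_step c i ltac:(by rewrite size_tuple ltnW); [right | left].
- apply: heights_eq => [|k hk hne]; last by rewrite height_flip // (negbTE hne) addr0.
  by rewrite height_flip ?(ltnW hi) // eqxx cU hc_i hs_succ; lia.
- by apply: heights_eq; rewrite ?cD ?hc_i ?hs_succ.
Qed.

Section LowestGap.
Variables (m : nat) (s t : m.-tuple bool).
Hypotheses (s_below_t : weakly_below s t) (same_end : height s m = height t m).

Lemma lowest_gap : s != t -> exists k : nat,
  [/\ (0 < k < m)%N, height s k < height t k &
      forall j, (j <= m)%N -> height s j < height t j -> height s k <= height s j].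
Proof.
move=> s_neq_t; pose gap (j : 'I_m.+1) := height s j < height t j.
have [j0 gap_j0] : exists j0, gap j0.
  apply/existsP; apply: contraNT s_neq_t => /existsPn no_gap; apply/eqP.
  apply: height_inj => k hk; apply/eqP; rewrite eq_le s_below_t //=.
  by rewrite leNgt; exact: (no_gap (Ordinal (hk : (k < m.+1)%N))).
case: (arg_minP (fun j : 'I_m.+1 => height s j) gap_j0) => k gap_k k_min.
exists k; split => // [|j hj gap_j]; last by have := k_min (inord j); rewrite /gap inordK //; apply.
apply/andP; split.
- by rewrite lt0n; apply: contraTN gap_k => /eqP k0; rewrite /gap k0 !height0 ltxx.
- rewrite ltn_neqAle -ltnS ltn_ord andbT; apply: contraTN gap_k => /eqP km.
  by rewrite /gap km same_end ltxx.
Qed.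

(* At such a k = i+1 the path s has a valley at i: a U step before k or a D
   step after k would yield a gap at a lower height of s. *)
Lemma valley_at_lowest_gap (i : nat) : (i.+1 < m)%N ->
  height s i.+1 < height t i.+1 ->
  (forall j, (j <= m)%N -> height s j < height t j -> height s i.+1 <= height s j) ->
  valley s i.
Proof.
move=> hi gap_i k_min; rewrite /valley hi /=.
have sz (u : m.-tuple bool) j : (j < m)%N -> (j < size u)%N by rewrite size_tuple.
apply/andP; split.
- apply/negP => up.
  have hs : height s i.+1 = height s i + 1 by rewrite heightS ?up ?sz //; lia.
  have ht : height t i.+1 - 1 <= height t i by case: (height_step (sz t i (ltnW hi))) => ->; lia.
  by have := k_min i (ltnW (ltnW hi)); rewrite hs; lia.
- apply/idPn => /negbTE down.
  have hs : height s i.+2 = height s i.+1 - 1 by rewrite heightS ?down ?sz.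
  have ht : height t i.+1 - 1 <= height t i.+2 by case: (height_step (sz t i.+1 hi)) => ->; lia.
  by have := k_min i.+2 hi; rewrite hs; lia.
Qed.

(* Hence s has a valley whose flip still lies below t (parity makes the gap
   at k at least 2). *)
Lemma valley_flip_below : s != t -> exists2 i, valley s i & weakly_below (flip s i) t.
Proof.
case/lowest_gap => [[|i]] [/andP[//= _ hi] gap_i k_min].
have hv := valley_at_lowest_gap hi gap_i k_min.
exists i => // k hk; rewrite height_flip //.
case: (eqVneq k i.+1) => [->|_]; last by rewrite addr0 s_below_t.
have [z hz] : exists z : int, height t i.+1 - height s i.+1 = 2%:Z * z.
  by apply: height_diff_even; rewrite size_tuple ltnW.
have : 0 < 2%:Z * z by rewrite -hz subr_gt0.
by lia.
Qed.
End LowestGap.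

Lemma flip_GD (n : nat) (t : (2 * n)%N.-tuple bool) (i : nat) :
  valley t i -> t \in GD n -> flip t i \in GD n.
Proof.
move=> hv; rewrite !inE height_flip //.
by case/and3P: hv => hi _ _; rewrite (gtn_eqF hi) addr0.
Qed.

Lemma flip_edge (n : nat) (s : (2 * n)%N.-tuple bool) (i : nat) :
  s \in GD n -> valley s i -> (s, flip s i) \in hasse_edges (GD n) (@below n).
Proof.
move=> hs hv; rewrite inE /= hs flip_GD //= eq_sym flip_neq //=.
apply/andP; split; first exact/belowP/below_flip.
apply/existsPn => c; apply/negP => /andP[_ /and4P[c_neq_s c_neq_f /belowP hsc /belowP hcf]].
by case: (between_flip hv hsc hcf) => e; [move/eqP: c_neq_s | move/eqP: c_neq_f].
Qed.

Lemma edge_flip (n : nat) (s t : (2 * n)%N.-tuple bool) :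
  (s, t) \in hasse_edges (GD n) (@below n) -> exists2 i, valley s i & t = flip s i.
Proof.
rewrite inE /= => /and5P[hs ht s_neq_t /belowP hst no_between].
have same_end : height s (2 * n) = height t (2 * n).
  by move: hs ht; rewrite !inE => /eqP -> /eqP ->.
have [i hv hft] := valley_flip_below hst same_end s_neq_t.
exists i => //; apply/eqP; rewrite eq_sym; apply: contraNT no_between => f_neq_t.
apply/existsP; exists (flip s i); rewrite flip_GD // flip_neq // f_neq_t /=.
by apply/andP; split; apply/belowP => //; apply: below_flip.
Qed.

Definition downs (m : nat) (t : m.-tuple bool) : {set 'I_m} := [set j | ~~ tnth t j].

Definition path_of_downs (m : nat) (A : {set 'I_m}) : m.-tuple bool :=
  [tuple j \notin A | j < m].

Lemma path_of_downsK (m : nat) : cancel (@path_of_downs m) (@downs m).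
Proof. by move=> A; apply/setP => j; rewrite inE tnth_mktuple negbK. Qed.

Lemma card_paths_by_downs (m : nat) (P : pred {set 'I_m}) :
  #|[set t : m.-tuple bool | P (downs t)]| = #|[set A | P A]|.
Proof.
have -> : [set t : m.-tuple bool | P (downs t)] = @path_of_downs m @: [set A | P A].
  apply/setP => t; rewrite inE; apply/idP/imsetP => [Pt | [A PA ->]].
    exists (downs t); rewrite ?inE //.
    by apply: eq_from_tnth => j; rewrite tnth_mktuple inE negbK.
  by rewrite path_of_downsK; move: PA; rewrite inE.
exact/card_imset/(can_inj (@path_of_downsK m)).
Qed.

Lemma card_downs (m : nat) (t : m.-tuple bool) : #|downs t| = count negb t.
Proof.
rewrite -[in RHS](map_tnth_enum t) count_map cardE size_filter enumT.
by apply: eq_count => j; rewrite /= inE.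
Qed.

Lemma GD_downs (n : nat) (t : (2 * n)%N.-tuple bool) : (t \in GD n) = (#|downs t| == n).
Proof.
rewrite inE heightE size_tuple minnn take_oversize ?size_tuple // card_downs.
by apply/eqP/eqP; lia.
Qed.

Lemma valley_downs (m i : nat) (hi : (i.+1 < m)%N) (t : m.-tuple bool) :
  valley t i = (Ordinal (ltnW hi) \in downs t) && (Ordinal hi \notin downs t).
Proof. by rewrite /valley hi !in_set negbK !(tnth_nth false). Qed.

(* The (k+1)-subsets containing a and avoiding b correspond to the k-subsets
   of the complement of {a, b}. *)
Lemma card_sets_in_out (T : finType) (a b : T) (k : nat) : a != b ->
  #|[set A : {set T} | [&& a \in A, b \notin A & #|A| == k.+1]]| = 'C(#|T| - 2, k).
Proof.
move=> a_neq_b; pose D := ~: [set a; b].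
have notin_D (B : {set T}) x : B \subset D -> x \in [set a; b] -> x \notin B.
  by move=> /subsetP sBD; apply: contraTN => /sBD; rewrite in_setC.
have -> : [set A : {set T} | [&& a \in A, b \notin A & #|A| == k.+1]] =
          (fun B : {set T} => a |: B) @: [set B : {set T} | B \subset D & #|B| == k].
  apply/setP => A; rewrite inE; apply/idP/imsetP => [/and3P[aA bA cardA] | [B]].
    exists (A :\ a); last by rewrite setD1K.
    rewrite (cardsD1 a) aA in cardA; rewrite inE -eqSS cardA andbT.
    by apply/subsetP => x; rewrite !inE negb_or => /andP[-> xA]; apply: contraNneq bA => <-.
  rewrite inE => /andP[sBD /eqP cardB] ->.
  have aB : a \notin B by apply: notin_D; rewrite // !inE eqxx.
  have bB : b \notin B by apply: notin_D; rewrite // !inE eqxx orbT.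
  by rewrite !inE eqxx (negbTE bB) (eq_sym b) (negbTE a_neq_b) cardsU1 aB cardB /= add1n eqxx.
rewrite card_in_imset ?cards_draws; last first.
  move=> B1 B2; rewrite !inE => /andP[s1 _] /andP[s2 _] e.
  have a_in : a \in [set a; b] by rewrite !inE eqxx.
  by rewrite -(setU1K (notin_D _ _ s1 a_in)) e setU1K // notin_D.
by rewrite cardsCs setCK cards2 a_neq_b.
Qed.

Lemma card_GD (n : nat) : #|GD n| = 'C(2 * n, n).
Proof.
have -> : GD n = [set t | #|downs t| == n] by apply/setP => t; rewrite GD_downs inE.
by rewrite (card_paths_by_downs (fun A => #|A| == n)) card_draws card_ord.
Qed.

Definition valley_paths (n i : nat) : {set (2 * n)%N.-tuple bool} :=
  [set s | (s \in GD n) && valley s i].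

Lemma card_valley_paths (n i : nat) : (i.+1 < 2 * n)%N ->
  #|valley_paths n i| = 'C(2 * n - 2, n.-1).
Proof.
move=> hi; have n_gt0 : (0 < n)%N by lia.
pose oi := Ordinal (ltnW hi); pose oj := Ordinal hi.
have -> : valley_paths n i =
    [set t | [&& oi \in downs t, oj \notin downs t & #|downs t| == n.-1.+1]].
  by apply/setP => t; rewrite [in LHS]inE GD_downs valley_downs [in RHS]inE prednK // andbC -andbA.
rewrite (card_paths_by_downs (fun A => [&& oi \in A, oj \notin A & #|A| == n.-1.+1])).
rewrite card_sets_in_out ?card_ord //.
by rewrite -val_eqE /= ltn_eqF.
Qed.

(* Covering pairs are in bijection with (valley position, path) pairs. *)
Lemma ell_sum (n : nat) : ell_GD n = \sum_(i < 2 * n) #|valley_paths n i|.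
Proof.
pose P := ('I_(2 * n) * (2 * n)%N.-tuple bool)%type.
rewrite /ell_GD; pose V := [set p : P | p.2 \in valley_paths n p.1].
pose edge_of (p : P) := (p.2, flip p.2 p.1).
have -> : hasse_edges (GD n) (@below n) = edge_of @: V.
  apply/setP => -[s t]; apply/idP/imsetP => [e | [[i s'] + [-> ->]]].
    have [i hv ->] := edge_flip e; have /and3P[/ltnW hi _ _] := hv.
    exists (Ordinal hi, s) => //; rewrite [_ \in V]inE [_ \in valley_paths _ _]inE hv andbT.
    by move: e; rewrite in_set => /and5P[].
  by rewrite [_ \in V]inE [_ \in valley_paths _ _]inE => /andP[hs hv]; apply: flip_edge.
rewrite card_in_imset; last first.
  move=> [i1 s1] [i2 s2]; rewrite !inE /= => /andP[_ hv1] /andP[_ hv2] e.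
  have es : s1 = s2 := congr1 fst e; have ef : flip s1 i1 = flip s2 i2 := congr1 snd e.
  rewrite -es in hv2 ef *; congr (_, _); apply: val_inj.
  exact: flip_injective ef.
rewrite -sum1_card (eq_bigl (fun p : P => xpredT p.1 && (p.2 \in valley_paths n p.1)));
  last by move=> p; rewrite [_ \in V]inE.
rewrite -(pair_big_dep xpredT (fun (i : 'I_(2 * n)) s => s \in valley_paths n i) (fun _ _ => 1%N)).
by apply: eq_bigr => i _; rewrite sum1_card.
Qed.

(* Summing over the 2n+1 valley positions of GD_{n+1}. *)
Lemma ell_GD_succ (n : nat) : ell_GD n.+1 = ((2 * n).+1 * 'C(2 * n, n))%N.
Proof.
rewrite ell_sum -(big_mkord xpredT (fun i => #|valley_paths n.+1 i|)).
rewrite (eq_bigr (fun i => if (i.+1 < 2 * n.+1)%N then 'C(2 * n, n) else 0%N)); last first.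
  move=> i _; case: ifP => hi.
    by rewrite card_valley_paths // (_ : 2 * n.+1 - 2 = 2 * n)%N //; lia.
  by apply: eq_card0 => s; rewrite !inE /valley hi andbF.
rewrite (_ : 2 * n.+1 = (2 * n).+2)%N; last lia.
rewrite big_nat_recr //= ltnn addr0 (eq_big_nat _ _ (F2 := fun _ => 'C(2 * n, n))).
  by rewrite sum_nat_const_nat subn0.
by move=> i /andP[_ hi]; rewrite ltnS hi.
Qed.

Lemma central_binomialS (m : nat) :
  (m.+1 * 'C((2 * m).+2, m.+1) = 2 * (2 * m).+1 * 'C(2 * m, m))%N.
Proof.
have up : ((2 * m).+2 * 'C((2 * m).+1, m) = m.+1 * 'C((2 * m).+2, m.+1))%N.
  exact: mul_bin_diag.
have down : ((2 * m).+1 * 'C(2 * m, m) = m.+1 * 'C((2 * m).+1, m))%N.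
  by rewrite (mul_bin_down (2 * m).+1) (_ : (2 * m).+1 - m = m.+1)%N //; lia.
apply/eqP; rewrite -(eqn_pmul2l (ltn0Sn m)) -up; apply/eqP.
by rewrite -mulnA down; ring.
Qed.

Lemma rising_three_halves (m : nat) :
  4 ^+ m * \prod_(i < m) (3%:R / 2%:R + i%:R) = ((2 * m).+1 * 'C(2 * m, m) * m`!)%:R :> rat.
Proof.
elim: m => [|m IH]; first by rewrite big_ord0 expr0 mulr1.
rewrite big_ord_recr /= exprSr mulrACA IH.
have step : ((2 * m.+1).+1 * 'C(2 * m.+1, m.+1) * m.+1`!)%N =
            (2 * (2 * m).+3 * ((2 * m).+1 * 'C(2 * m, m) * m`!))%N.
  rewrite factS (_ : 2 * m.+1 = (2 * m).+2)%N; last lia.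
  by rewrite mulnA -(mulnA _ _ m.+1) (mulnC _ m.+1) central_binomialS; ring.
rewrite step !natrM (_ : (2 * m).+3 = 2 * m + 3)%N; last lia.
by rewrite natrD natrM; field.
Qed.

Lemma gf_coefS (m : nat) : gf_coef m.+1 = ((2 * m).+1 * 'C(2 * m, m))%:R.
Proof. by rewrite /gf_coef rising_three_halves natrM mulfK // pnatr_eq0 -lt0n fact_gt0. Qed.

Lemma ell_GD_binomial (n : nat) : (ell_GD n)%:R = ('C(2 * n, n))%:R * n%:R / 2%:R :> rat.
Proof.
case: n => [|m]; first by rewrite ell_sum big_ord0 mulr0 mul0r.
rewrite ell_GD_succ (_ : 2 * m.+1 = (2 * m).+2)%N; last lia.
by rewrite -natrM (mulnC 'C(_, _)) central_binomialS !natrM; field.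
Qed.

Theorem mainTheorem5 :
  forall n : nat,
    [/\ (ell_GD n)%:R = gf_coef n :> rat,
        (ell_GD n)%:R = ('C(2 * n, n))%:R * n%:R / 2%:R :> rat
      & i_GD n = n%:R / 2%:R].
Proof.
move=> n; split; first by case: n => [|m]; rewrite ?ell_GD_succ ?gf_coefS // ell_sum big_ord0.
  exact: ell_GD_binomial.
have binom_neq0 : ('C(2 * n, n))%:R != 0 :> rat by rewrite pnatr_eq0 -lt0n bin_gt0; lia.
by rewrite /i_GD ell_GD_binomial card_GD; field.
Qed.
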